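(* Let $q\neq0$ and let $\gamma\colon I\to\mathbb R^3$ be a curve parametrized by arc-length which is not a straight line and satisfies $\gamma''=q\,\gamma\times\gamma'$ (i.e. $\gamma$ is a conformal trajectory of the radial vector field $V(x,y,z)=x\partial_x+y\partial_y+z\partial_z$). Then the curvature of $\gamma$ is a nonzero constant $\kappa_0$, and there exists $a_0\in\mathbb R$ such that $\langle\gamma(s),\gamma'(s)\rangle=s+a_0$, the torsion is the affine function $\tau(s)=q(s+a_0)$, and $$\gamma(s)=(s+a_0)\gamma'(s)+\frac1q\,\gamma'(s)\times\gamma''(s)\quad\text{for all }s\in I.$$
   Context: $\times$ denotes the usual cross product of $\mathbb R^3$ and $\langle\cdot,\cdot\rangle$ the Euclidean inner product. Frenet frame of a non-straight unit-speed curve: $T=\gamma'$, $T'=\kappa N$ with $\kappa>0$, $B=T\times N$, $N'=-\kappa T+\tau B$, $B'=-\tau N$; $\kappa$ is the curvature and $\tau$ the torsion. *)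

From Stdlib Require Import Reals.
From Coquelicot Require Import Coquelicot.
Open Scope R_scope.

Definition vec := (R * R * R)%type.
Definition vx (v : vec) : R := fst (fst v).
Definition vy (v : vec) : R := snd (fst v).
Definition vz (v : vec) : R := snd v.
Definition mkv (a b c : R) : vec := (a, b, c).

Definition vadd (u v : vec) : vec := mkv (vx u + vx v) (vy u + vy v) (vz u + vz v).
Definition vscal (k : R) (v : vec) : vec := mkv (k * vx v) (k * vy v) (k * vz v).
Definition dot (u v : vec) : R := vx u * vx v + vy u * vy v + vz u * vz v.
Definition cross (u v : vec) : vec :=
  mkv (vy u * vz v - vz u * vy v)
      (vz u * vx v - vx u * vz v)
      (vx u * vy v - vy u * vx v).
Definition vnorm (v : vec) : R := sqrt (dot v v).

Definition vderiv (f : R -> vec) (s : R) (v : vec) : Prop :=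
  is_derive (fun t => vx (f t)) s (vx v) /\
  is_derive (fun t => vy (f t)) s (vy v) /\
  is_derive (fun t => vz (f t)) s (vz v).

Definition in_interval (a b : Rbar) (s : R) : Prop := Rbar_lt a s /\ Rbar_lt s b.

(* Frenet apparatus of a curve with velocity g1 and acceleration g2 *)
Definition curvature (g2 : R -> vec) (s : R) : R := vnorm (g2 s).
Definition frenetT (g1 : R -> vec) (s : R) : vec := g1 s.
Definition frenetN (g2 : R -> vec) (s : R) : vec := vscal (/ curvature g2 s) (g2 s).
Definition frenetB (g1 g2 : R -> vec) (s : R) : vec := cross (frenetT g1 s) (frenetN g2 s).

Definition is_torsion (a b : Rbar) (g1 g2 : R -> vec) (tau : R -> R) : Prop :=
  forall s, in_interval a b s ->
    vderiv (frenetN g2) s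
      (vadd (vscal (- curvature g2 s) (frenetT g1 s)) (vscal (tau s) (frenetB g1 g2 s))).

(* The hypothesis gamma'' = q gamma x gamma' makes gamma'' orthogonal to gamma, so
   d/ds <gamma, T> = |T|^2 = 1 and <gamma, T> = s + a0.  By Lagrange's identity
   kappa^2 = |gamma''|^2 = q^2 (|gamma|^2 - <gamma, T>^2), whose derivative
   2<gamma, T> - 2<gamma, T> vanishes, so kappa is constant.  Expanding
   T x (gamma x T) = gamma - <gamma, T> T gives the formula for gamma, and
   differentiating N = (q / kappa) gamma x T and expanding gamma x (gamma x T)
   gives N' = -kappa T + q (s + a0) B, the last step using the value of kappa^2. *)
From Stdlib Require Import Reals Lra Psatz.
From Coquelicot Require Import Coquelicot.
Open Scope R_scope.

Lemma vec_ext (u v : vec) : vx u = vx v -> vy u = vy v -> vz u = vz v -> u = v.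
Proof.
  destruct u as [[x y] z], v as [[x' y'] z']; unfold vx, vy, vz; simpl.
  intros; subst; reflexivity.
Qed.

Ltac vec_components :=
  apply vec_ext; unfold vadd, vscal, cross, dot, vx, vy, vz, mkv; simpl.

Lemma dot_scal_l (k : R) (u v : vec) : dot (vscal k u) v = k * dot u v.
Proof. unfold dot, vscal, vx, vy, vz, mkv; simpl; ring. Qed.

Lemma dot_scal_r (k : R) (u v : vec) : dot u (vscal k v) = k * dot u v.
Proof. unfold dot, vscal, vx, vy, vz, mkv; simpl; ring. Qed.

Lemma dot_cross_l (u v : vec) : dot u (cross u v) = 0.
Proof. unfold dot, cross, vx, vy, vz, mkv; simpl; ring. Qed.

Lemma dot_cross_cross (u v : vec) :
  dot (cross u v) (cross u v) = dot u u * dot v v - dot u v * dot u v.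
Proof. unfold dot, cross, vx, vy, vz, mkv; simpl; ring. Qed.

Lemma dot_self_pos (v : vec) : v <> mkv 0 0 0 -> 0 < dot v v.
Proof.
  destruct v as [[x y] z]; unfold dot, vx, vy, vz, mkv; simpl; intros Hv.
  destruct (Req_dec x 0), (Req_dec y 0), (Req_dec z 0); subst;
    [exfalso; apply Hv; reflexivity | nra ..].
Qed.

Lemma dot_self_unit (v : vec) : vnorm v = 1 -> dot v v = 1.
Proof.
  unfold vnorm; intros Hv.
  assert (Hpos : 0 <= dot v v) by (unfold dot; nra).
  rewrite <- (sqrt_sqrt _ Hpos), Hv; ring.
Qed.

Lemma is_derive_Rplus (f h : R -> R) (s df dh : R) :
  is_derive f s df -> is_derive h s dh -> is_derive (fun t => f t + h t) s (df + dh).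
Proof. exact (is_derive_plus f h s df dh). Qed.

Lemma is_derive_Rminus (f h : R -> R) (s df dh : R) :
  is_derive f s df -> is_derive h s dh -> is_derive (fun t => f t - h t) s (df - dh).
Proof. exact (is_derive_minus f h s df dh). Qed.

Lemma is_derive_Rmult (f h : R -> R) (s df dh : R) :
  is_derive f s df -> is_derive h s dh ->
  is_derive (fun t => f t * h t) s (df * h s + f s * dh).
Proof. intros Hf Hh; apply (is_derive_mult f h); auto; intros; apply Rmult_comm. Qed.

Lemma is_derive_dot (f h : R -> vec) (s : R) (df dh : vec) :
  vderiv f s df -> vderiv h s dh ->
  is_derive (fun t => dot (f t) (h t)) s (dot df (h s) + dot (f s) dh).
Proof.
  intros [Fx [Fy Fz]] [Hx [Hy Hz]]; unfold dot.
  replace (_ + _) with ((vx df * vx (h s) + vx (f s) * vx dh +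
                         (vy df * vy (h s) + vy (f s) * vy dh)) +
                        (vz df * vz (h s) + vz (f s) * vz dh)) by ring.
  apply is_derive_Rplus; [apply is_derive_Rplus|]; apply is_derive_Rmult; assumption.
Qed.

Lemma vderiv_scal (k : R) (f : R -> vec) (s : R) (df : vec) :
  vderiv f s df -> vderiv (fun t => vscal k (f t)) s (vscal k df).
Proof.
  intros [X [Y Z]]; unfold vderiv, vscal, vx, vy, vz, mkv in *; simpl in *.
  split; [|split]; apply is_derive_scal; assumption.
Qed.

Lemma vderiv_cross (f h : R -> vec) (s : R) (df dh : vec) :
  vderiv f s df -> vderiv h s dh ->
  vderiv (fun t => cross (f t) (h t)) s (vadd (cross df (h s)) (cross (f s) dh)).
Proof.
  intros [Fx [Fy Fz]] [Hx [Hy Hz]].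
  unfold vderiv, vadd, cross, vx, vy, vz, mkv in *; simpl in *.
  split; [|split];
    match goal with |- is_derive _ _ (?u1 * ?u2 - ?u3 * ?u4 + (?v1 * ?v2 - ?v3 * ?v4)) =>
      replace (u1 * u2 - u3 * u4 + (v1 * v2 - v3 * v4))
        with (u1 * u2 + v1 * v2 - (u3 * u4 + v3 * v4)) by ring end;
    apply is_derive_Rminus; apply is_derive_Rmult; assumption.
Qed.

Lemma vderiv_ext_loc (f h : R -> vec) (s : R) (v : vec) :
  locally s (fun t => f t = h t) -> vderiv f s v -> vderiv h s v.
Proof.
  intros Hfh [X [Y Z]]; split; [|split];
    (eapply is_derive_ext_loc; [|eassumption]);
    (eapply filter_imp; [|exact Hfh]); intros t ->; reflexivity.
Qed.

Lemma in_interval_between (a b : Rbar) (s t x : R) :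
  in_interval a b s -> in_interval a b t -> Rmin s t <= x <= Rmax s t ->
  in_interval a b x.
Proof.
  intros [Has Hsb] [Hat Htb] [Hmin Hmax]; split.
  - apply (Rbar_lt_le_trans a (Rmin s t) x); [|exact Hmin].
    unfold Rmin; destruct (Rle_dec s t); assumption.
  - apply (Rbar_le_lt_trans x (Rmax s t) b); [exact Hmax|].
    unfold Rmax; destruct (Rle_dec s t); assumption.
Qed.

Lemma in_interval_locally (a b : Rbar) (s : R) :
  in_interval a b s -> locally s (in_interval a b).
Proof.
  apply (open_and (T := R_UniformSpace) (fun u : R => Rbar_lt a u) (fun u : R => Rbar_lt u b)).
  - apply open_Rbar_gt.
  - apply open_Rbar_lt.
Qed.

Lemma is_derive_0_const (a b : Rbar) (f : R -> R) :
  (forall s, in_interval a b s -> is_derive f s 0) ->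
  forall s t, in_interval a b s -> in_interval a b t -> f s = f t.
Proof.
  intros Hd s t Hs Ht.
  destruct (MVT_gen f s t (fun _ => 0)) as [c [_ Hc]].
  - intros x Hx; apply Hd, (in_interval_between a b s t); auto; lra.
  - intros x Hx; apply continuity_pt_filterlim.
    apply (ex_derive_continuous (K := R_AbsRing) (V := R_NormedModule)).
    exists 0; apply Hd, (in_interval_between a b s t); auto.
  - lra.
Qed.

Lemma position_identity (q : R) (x t : vec) :
  q <> 0 -> dot t t = 1 ->
  x = vadd (vscal (dot x t) t) (vscal (/ q) (cross t (vscal q (cross x t)))).
Proof.
  intros Hq Htt.
  transitivity (vadd (vscal (dot t t) x) (vscal (dot x t - dot t x) t)).
  - rewrite Htt; vec_components; ring.
  - vec_components; field; exact Hq.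
Qed.

Lemma torsion_identity (q k : R) (x t : vec) :
  k <> 0 -> dot t t = 1 -> k * k = q * q * (dot x x - dot x t * dot x t) ->
  vscal (/ k) (vscal q (vadd (cross t t) (cross x (vscal q (cross x t))))) =
  vadd (vscal (- k) t) (vscal (q * dot x t) (cross t (vscal (/ k) (vscal q (cross x t))))).
Proof.
  intros Hk Htt Hkk.
  transitivity (vadd (vscal (/ k * (q * q) * dot x t) x) (vscal (- (/ k * (q * q) * dot x x)) t));
    [vec_components; ring|].
  transitivity (vadd (vscal (/ k * (q * q) * dot x t * dot t t) x)
                     (vscal (- k - / k * (q * q) * dot x t * dot x t) t));
    [|vec_components; ring].
  rewrite Htt, Rmult_1_r; do 2 f_equal.
  transitivity (/ k * - (k * k) - / k * (q * q) * dot x t * dot x t).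
  - rewrite Hkk; field; exact Hk.
  - field; exact Hk.
Qed.

Section ConformalTrajectory.

Variables (q : R) (a b : Rbar) (g g1 g2 : R -> vec).
Hypothesis q_neq0 : q <> 0.
Hypothesis g_deriv : forall s, in_interval a b s -> vderiv g s (g1 s).
Hypothesis g1_deriv : forall s, in_interval a b s -> vderiv g1 s (g2 s).
Hypothesis g1_unit : forall s, in_interval a b s -> vnorm (g1 s) = 1.
Hypothesis g2_eq : forall s, in_interval a b s -> g2 s = vscal q (cross (g s) (g1 s)).

Let I := in_interval a b.

Lemma dot_vel_vel (s : R) : I s -> dot (g1 s) (g1 s) = 1.
Proof. intros Hs; exact (dot_self_unit _ (g1_unit s Hs)). Qed.

Lemma is_derive_dot_pos_vel (s : R) : I s -> is_derive (fun t => dot (g t) (g1 t)) s 1.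
Proof.
  intros Hs.
  replace 1 with (dot (g1 s) (g1 s) + dot (g s) (g2 s)).
  - exact (is_derive_dot _ _ _ _ _ (g_deriv s Hs) (g1_deriv s Hs)).
  - rewrite dot_vel_vel, g2_eq, dot_scal_r, dot_cross_l by exact Hs; ring.
Qed.

Lemma dot_pos_vel_affine (s0 : R) : I s0 ->
  forall s, I s -> dot (g s) (g1 s) = s + (dot (g s0) (g1 s0) - s0).
Proof.
  intros Hs0 s Hs.
  assert (E : dot (g s) (g1 s) - s = dot (g s0) (g1 s0) - s0).
  { apply (is_derive_0_const a b (fun t => dot (g t) (g1 t) - t)); auto.
    intros u Hu; replace 0 with (1 - 1) by ring.
    apply (is_derive_Rminus _ _ _ _ _ (is_derive_dot_pos_vel u Hu) (is_derive_id u)). }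
  lra.
Qed.

Definition radial_defect (t : R) : R := dot (g t) (g t) - dot (g t) (g1 t) * dot (g t) (g1 t).

Lemma dot_acc_acc (s : R) : I s -> dot (g2 s) (g2 s) = q * q * radial_defect s.
Proof.
  intros Hs; unfold radial_defect.
  rewrite g2_eq, dot_scal_l, dot_scal_r, dot_cross_cross, dot_vel_vel by exact Hs; ring.
Qed.

Lemma radial_defect_const (s t : R) : I s -> I t -> radial_defect s = radial_defect t.
Proof.
  apply is_derive_0_const; intros u Hu.
  replace 0 with (dot (g1 u) (g u) + dot (g u) (g1 u) -
                  (1 * dot (g u) (g1 u) + dot (g u) (g1 u) * 1))
    by (unfold dot; ring).
  apply (is_derive_Rminus _ _ _ _ _ (is_derive_dot _ _ _ _ _ (g_deriv u Hu) (g_deriv u Hu))).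
  apply is_derive_Rmult; apply is_derive_dot_pos_vel, Hu.
Qed.

Lemma curvature_const (s t : R) : I s -> I t -> curvature g2 s = curvature g2 t.
Proof.
  intros Hs Ht; unfold curvature, vnorm.
  rewrite !dot_acc_acc, (radial_defect_const s t) by assumption; reflexivity.
Qed.

Lemma curvature_sq (s : R) : I s ->
  curvature g2 s * curvature g2 s = q * q * radial_defect s.
Proof.
  intros Hs; unfold curvature, vnorm.
  rewrite sqrt_sqrt, dot_acc_acc by (auto; unfold dot; nra); reflexivity.
Qed.

Lemma position_formula (s : R) : I s ->
  g s = vadd (vscal (dot (g s) (g1 s)) (g1 s)) (vscal (/ q) (cross (g1 s) (g2 s))).
Proof.
  intros Hs; rewrite g2_eq by exact Hs.
  exact (position_identity q (g s) (g1 s) q_neq0 (dot_vel_vel s Hs)).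
Qed.

Lemma frenetN_deriv (s : R) : I s -> curvature g2 s <> 0 ->
  vderiv (frenetN g2) s
    (vadd (vscal (- curvature g2 s) (frenetT g1 s))
          (vscal (q * dot (g s) (g1 s)) (frenetB g1 g2 s))).
Proof.
  intros Hs Hk.
  set (k := curvature g2 s) in *.
  assert (HN : forall t, I t -> frenetN g2 t = vscal (/ k) (vscal q (cross (g t) (g1 t)))).
  { intros t Ht; unfold frenetN, k; rewrite (curvature_const t s), g2_eq by assumption.
    reflexivity. }
  apply (vderiv_ext_loc (fun t => vscal (/ k) (vscal q (cross (g t) (g1 t))))).
  { eapply filter_imp; [|exact (in_interval_locally a b s Hs)].
    intros t Ht; symmetry; exact (HN t Ht). }
  unfold frenetB, frenetT; rewrite HN by exact Hs.
  rewrite <- torsion_identity; [| exact Hk | exact (dot_vel_vel s Hs) | exact (curvature_sq s Hs)].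
  rewrite <- g2_eq by exact Hs.
  apply vderiv_scal, vderiv_scal, vderiv_cross; [apply g_deriv | apply g1_deriv]; exact Hs.
Qed.

End ConformalTrajectory.

Theorem theorem1 (q : R) (a b : Rbar) (g g1 g2 : R -> vec) :
  q <> 0 ->
  Rbar_lt a b ->
  (forall s, in_interval a b s -> vderiv g s (g1 s)) ->
  (forall s, in_interval a b s -> vderiv g1 s (g2 s)) ->
  (forall s, in_interval a b s -> vnorm (g1 s) = 1) ->
  (exists s, in_interval a b s /\ g2 s <> mkv 0 0 0) ->
  (forall s, in_interval a b s -> g2 s = vscal q (cross (g s) (g1 s))) ->
  (exists k0, k0 <> 0 /\ forall s, in_interval a b s -> curvature g2 s = k0) /\
  (exists a0,
     (forall s, in_interval a b s -> dot (g s) (g1 s) = s + a0) /\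
     is_torsion a b g1 g2 (fun s => q * (s + a0)) /\
     (forall s, in_interval a b s ->
        g s = vadd (vscal (s + a0) (g1 s)) (vscal (/ q) (cross (g1 s) (g2 s))))).
Proof.
  intros Hq _ Hg Hg1 Hunit [s0 [Hs0 Hbent]] Hacc.
  pose proof (curvature_const q a b g g1 g2 Hg Hg1 Hunit Hacc) as Hconst.
  pose proof (dot_pos_vel_affine q a b g g1 g2 Hg Hg1 Hunit Hacc s0 Hs0) as Haff.
  assert (Hk0 : curvature g2 s0 <> 0).
  { apply Rgt_not_eq, sqrt_lt_R0, dot_self_pos, Hbent. }
  split.
  - exists (curvature g2 s0); split; [exact Hk0|].
    intros s Hs; exact (Hconst s s0 Hs Hs0).
  - exists (dot (g s0) (g1 s0) - s0); split; [|split].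
    + exact Haff.
    + intros s Hs; rewrite <- Haff by exact Hs.
      apply (frenetN_deriv q a b g g1 g2 Hg Hg1 Hunit Hacc s Hs).
      rewrite (Hconst s s0 Hs Hs0); exact Hk0.
    + intros s Hs; rewrite <- Haff by exact Hs.
      exact (position_formula q a b g g1 g2 Hq Hunit Hacc s Hs).
Qed.
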